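(* Let $n,s$ be positive integers with $2s\le n$ and let $L=[s]=\{1,\ldots,s\}$. Let $\mathcal{F}\subseteq2^{[n]}$ be $L$-close Sperner (respectively, $L$-differencing Sperner). Then there exists $\mathcal{F}'\subseteq2^{[n]}$ with $|\mathcal{F}'|=|\mathcal{F}|$, such that $s\le|A|\le n-s$ for every $A\in\mathcal{F}'$, and $\mathcal{F}'$ is $L$-close Sperner (respectively, $L$-differencing Sperner).
   Context: $\mathcal{F}\subseteq2^{[n]}$ is $L$-differencing Sperner if $|A\setminus B|\in L$ for all distinct $A,B\in\mathcal{F}$, and $L$-close Sperner if $\min\{|A\setminus B|,|B\setminus A|\}\in L$ for all distinct $A,B\in\mathcal{F}$. *)

From mathcomp Require Import all_boot.
Set Implicit Arguments. Unset Strict Implicit. Unset Printing Implicit Defensive.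

(* Ground set [n] is represented by 'I_n; families are F : {set {set 'I_n}}. *)

Definition L_differencing (n : nat) (L : pred nat) (F : {set {set 'I_n}}) : Prop :=
  forall A B, A \in F -> B \in F -> A != B -> L #|A :\: B|.

Definition L_close (n : nat) (L : pred nat) (F : {set {set 'I_n}}) : Prop :=
  forall A B, A \in F -> B \in F -> A != B -> L (minn #|A :\: B| #|B :\: A|).

Definition range1 (s : nat) : pred nat := fun k => (1 <= k) && (k <= s).

From mathcomp Require Import all_boot zify.
Set Implicit Arguments. Unset Strict Implicit. Unset Printing Implicit Defensive.

(* Both properties say that F is an antichain whose distinct members satisfy a
   relation ok (min(|A\B|,|B\A|) <= s, resp. |A\B| <= s) that holds as soon as
   the first set has at most s elements, is closed under enlarging the second set
   within size s, and is invariant under complementing both sets.  While some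
   member has fewer than s elements, replace the bottom layer (size k < s <= n/2)
   by as many sets of its upper shadow: double counting gives the layer at most as
   many sets as its shadow, the new sets of size k+1 <= s satisfy ok automatically,
   and they stay incomparable with the rest.  This pushes all sizes up to >= s;
   complementing, repeating and complementing back pushes them down to <= n - s. *)

Lemma exists_subset_card (T : finType) (N : {set T}) m :
  m <= #|N| -> exists2 H : {set T}, H \subset N & #|H| = m.
Proof.
move=> le_mN; exists [set x in take m (enum N)].
  by apply/subsetP=> x; rewrite inE => /mem_take; rewrite mem_enum.
rewrite cardsE (card_uniqP _) ?take_uniq ?enum_uniq // size_take -cardE.
by case: ltngtP le_mN.
Qed.

Lemma card_set_in_sum (T : finType) (A : {set T}) (P : pred T) :
  #|[set x in A | P x]| = \sum_(x in A) P x.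
Proof. by rewrite -sum1dep_card big_mkcondr /=; apply: eq_bigr => x _; case: (P x). Qed.

Lemma double_count (T U : finType) (D : {set T}) (E : {set U}) (r : T -> U -> bool) :
  \sum_(x in D) #|[set y in E | r x y]| = \sum_(y in E) #|[set x in D | r x y]|.
Proof.
under eq_bigr do rewrite card_set_in_sum.
by rewrite exchange_big; under [RHS]eq_bigr do rewrite card_set_in_sum.
Qed.

Lemma cardsCB (T : finType) (A : {set T}) : #|~: A| = #|T| - #|A|.
Proof. by rewrite -(cardsC A) addKn. Qed.

Lemma card_setD_gt0 (T : finType) (A B : {set T}) : (0 < #|A :\: B|) = ~~ (A \subset B).
Proof. by rewrite card_gt0 setD_eq0. Qed.

Section UpperShadow.
Variable T : finType.
Implicit Types (A X : {set T}) (G : {set {set T}}).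

Definition upper_shadow (k : nat) G :=
  [set X : {set T} | (#|X| == k.+1) && [exists A in G, A \subset X]].

Lemma upper_shadowP k G X :
  reflect (#|X| = k.+1 /\ exists2 A, A \in G & A \subset X) (X \in upper_shadow k G).
Proof.
rewrite inE; apply: (iffP andP).
  by case=> /eqP cardX /existsP[A /andP[AG AX]]; split; last exists A.
by case=> cardX [A AG AX]; rewrite cardX; split=> //; apply/existsP; exists A; rewrite AG.
Qed.

Lemma card_supsets1 A :
  #|T| - #|A| <= #|[set X : {set T} | (A \subset X) && (#|X| == #|A|.+1)]|.
Proof.
have inj_add : {in ~: A &, injective (fun x => x |: A)}.
  move=> x y; rewrite !inE => xA yA eq_xy.
  have /setU1P[// | xA'] : x \in y |: A by rewrite -eq_xy setU11.
  by rewrite xA' in xA.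
rewrite -cardsCB -(card_in_imset inj_add); apply/subset_leq_card/subsetP.
move=> _ /imsetP[x xA ->]; rewrite inE in xA.
by rewrite inE subsetUr cardsU1 xA add1n eqxx.
Qed.

Lemma card_subsets1 X : #|[set A : {set T} | (A \subset X) && (#|A|.+1 == #|X|)]| <= #|X|.
Proof.
apply: leq_trans (leq_imset_card (fun x => X :\ x) X); apply/subset_leq_card/subsetP.
move=> A; rewrite inE => /andP[AX /eqP cardX].
have /cards1P[x defx] : #|X :\: A| == 1 by rewrite cardsD (setIidPr AX) -cardX subSnn.
apply/imsetP; exists x; first by have /setDP[] : x \in X :\: A by rewrite defx set11.
by rewrite -defx setDDr setDv set0U (setIidPr AX).
Qed.

Lemma leq_card_upper_shadow k G :
  k.+1 <= #|T| - k -> {in G, forall A, #|A| = k} -> #|G| <= #|upper_shadow k G|.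
Proof.
move=> le_k cardG; set S := upper_shadow k G.
rewrite -(leq_pmul2r (ltn0Sn k)); apply: leq_trans (leq_mul (leqnn _) le_k) _.
rewrite -!sum_nat_const.
have count_up A : A \in G -> #|T| - k <= #|[set X in S | A \subset X]|.
  move=> AG; rewrite -(cardG A AG); apply: leq_trans (card_supsets1 A) _.
  apply/subset_leq_card/subsetP => X; rewrite !inE (cardG A AG) => /andP[AX ->].
  by rewrite AX andbT; apply/existsP; exists A; rewrite AG.
have count_down X : X \in S -> #|[set A in G | A \subset X]| <= k.+1.
  rewrite inE => /andP[/eqP cardX _]; rewrite -cardX.
  apply: leq_trans (card_subsets1 X); apply/subset_leq_card/subsetP => A.
  by rewrite !inE cardX => /andP[AG ->]; rewrite cardG ?eqxx.
apply: leq_trans (_ : _ <= \sum_(A in G) #|[set X in S | A \subset X]|) _.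
  exact: leq_sum.
by rewrite double_count; apply: leq_sum.
Qed.

End UpperShadow.

Section RelSperner.
Variables (T : finType) (ok : rel {set T}).
Implicit Types (A B X : {set T}) (F H : {set {set T}}).

Definition rel_sperner F :=
  {in F &, forall A B, A != B -> ~~ (A \subset B) && ok A B}.

Definition layer k F := [set A in F | #|A| == k].

Lemma layer_sub k F : layer k F \subset F.
Proof. by apply/subsetP => A; rewrite inE => /andP[]. Qed.

Lemma upper_shadow_layer_notin k F X :
  rel_sperner F -> X \in upper_shadow k (layer k F) -> X \notin F.
Proof.
move=> spF /upper_shadowP[cardX [A /[!inE] /andP[AF /eqP cardA] AX]].
apply/negP => XF.
have neqAX : A != X by apply/eqP => eqAX; move: cardX; rewrite -eqAX cardA; lia.
by have /andP[/negP] := spF A X AF XF neqAX.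
Qed.

Lemma card_replace_layer k F H :
  rel_sperner F -> H \subset upper_shadow k (layer k F) -> #|H| = #|layer k F| ->
  #|F :\: layer k F :|: H| = #|F|.
Proof.
move=> spF sub_H cardH; have sub_layer := layer_sub k F.
have disjH : [disjoint F :\: layer k F & H].
  rewrite disjoint_subset; apply/subsetP => X /setDP[XF _]; rewrite inE.
  by apply: contraL XF => XH; apply: upper_shadow_layer_notin spF (subsetP sub_H X XH).
rewrite cardsU disjoint_setI0 // cards0 subn0 cardsD (setIidPr sub_layer) cardH.
by rewrite subnK // subset_leq_card.
Qed.

Variable s : nat.
Hypothesis ok_small : forall A B, #|A| <= s -> ok A B.
Hypothesis ok_grow : forall A B X, B \subset X -> #|X| <= s -> ok A B -> ok A X.

Lemma rel_sperner_replace_layer k F H :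
  k < s -> rel_sperner F -> {in F, forall A, k <= #|A|} ->
  H \subset upper_shadow k (layer k F) -> rel_sperner (F :\: layer k F :|: H).
Proof.
move=> lt_ks spF geF sub_H.
have inH X : X \in H -> #|X| = k.+1 /\ exists2 C, C \in F & (#|C| = k) /\ C \subset X.
  move=> /(subsetP sub_H)/upper_shadowP[cardX [C /[!inE] /andP[CF /eqP cardC] CX]].
  by split=> //; exists C.
have notinF X : X \in H -> X \notin F.
  by move=> /(subsetP sub_H); apply: upper_shadow_layer_notin.
have sizeH X Y : X \in H -> Y \in H -> X != Y -> ~~ (X \subset Y).
  move=> /inH[cardX _] /inH[cardY _]; apply: contra_neqN => XY.
  by apply/eqP; rewrite eqEcard XY cardX cardY leqnn.
have gtF A : A \in F -> A \notin layer k F -> k < #|A|.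
  by move=> AF; rewrite inE AF ltn_neqAle eq_sym => ->; apply: geF.
move=> A B /setUP[/setDP[AF AnG] | AH] /setUP[/setDP[BF BnG] | BH] neqAB.
- exact: spF.
- have [cardB [C CF [cardC CB]]] := inH B BH.
  have neqAC : A != C by apply: contraTneq (gtF A AF AnG) => ->; rewrite cardC ltnn.
  apply/andP; split.
    apply: contra (notinF B BH) => AB; suff <- : A = B by [].
    by apply/eqP; rewrite eqEcard AB cardB gtF.
  by apply: (ok_grow CB); [rewrite cardB | case/andP: (spF A C AF CF neqAC)].
- have [cardA [C CF [cardC CA]]] := inH A AH.
  have neqCB : C != B by apply: contraTneq (gtF B BF BnG) => <-; rewrite cardC ltnn.
  rewrite ok_small ?cardA // andbT; apply/negP => AB.
  by case/andP: (spF C B CF BF neqCB) => /negP[]; apply: subset_trans CA AB.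
- by rewrite sizeH // ok_small // (proj1 (inH A AH)).
Qed.

Lemma rel_sperner_raise_layer k u F :
  k < s -> s <= u -> 2 * s <= #|T| -> rel_sperner F -> {in F, forall A, k <= #|A| <= u} ->
  exists F', [/\ #|F'| = #|F|, rel_sperner F' & {in F', forall A, k < #|A| <= u}].
Proof.
move=> lt_ks le_su le_sT spF sizeF.
have le_kT : k.+1 <= #|T| - k by lia.
have layer_card : {in layer k F, forall A, #|A| = k}.
  by move=> A; rewrite inE => /andP[_ /eqP].
have [H sub_H cardH] := exists_subset_card (leq_card_upper_shadow le_kT layer_card).
exists (F :\: layer k F :|: H); split; first exact: card_replace_layer.
  by apply: rel_sperner_replace_layer => // A /sizeF /andP[].
move=> A /setUP[/setDP[AF] | /(subsetP sub_H)/upper_shadowP[-> _]]; last by lia.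
by rewrite inE AF /=; have /andP[] := sizeF A AF; lia.
Qed.

Lemma rel_sperner_raise_min u F :
  s <= u -> 2 * s <= #|T| -> rel_sperner F -> {in F, forall A, #|A| <= u} ->
  exists F', [/\ #|F'| = #|F|, rel_sperner F' & {in F', forall A, s <= #|A| <= u}].
Proof.
move=> le_su le_sT spF leF.
suff raise_from m G : rel_sperner G -> {in G, forall A, s - m <= #|A| <= u} ->
    exists F', [/\ #|F'| = #|G|, rel_sperner F' & {in F', forall A, s <= #|A| <= u}].
  by apply: (raise_from s) => // A AF; rewrite subnn leF.
elim: m G => [|m IHm] G spG sizeG.
  by exists G; split=> // A /sizeG; rewrite subn0.
have [le_sm | lt_ms] := leqP s m.
  by apply: IHm => // A /sizeG; have -> : s - m.+1 = s - m by lia.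
have lt_ks : s - m.+1 < s by lia.
have [G1 [<- spG1 sizeG1]] := rel_sperner_raise_layer lt_ks le_su le_sT spG sizeG.
by apply: IHm => // A /sizeG1; have -> : (s - m.+1).+1 = s - m by lia.
Qed.

Hypothesis ok_setC : forall A B, ok (~: A) (~: B) = ok B A.

Lemma rel_sperner_setC F : rel_sperner F -> rel_sperner [set ~: A | A in F].
Proof.
move=> spF _ _ /imsetP[A AF ->] /imsetP[B BF ->] neqAB.
by rewrite setCS ok_setC spF //; apply: contraNneq neqAB => ->.
Qed.

Lemma rel_sperner_middle_layers F :
  2 * s <= #|T| -> rel_sperner F ->
  exists F', [/\ #|F'| = #|F|, rel_sperner F' & {in F', forall A, s <= #|A| <= #|T| - s}].
Proof.
move=> le_sT spF.
have le_sT' : s <= #|T| by lia.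
have [F1 [cardF1 spF1 sizeF1]] :=
  rel_sperner_raise_min le_sT' le_sT spF (fun A _ => max_card A).
have le_s_Ts : s <= #|T| - s by lia.
have sizeCF1 : {in [set ~: A | A in F1], forall A, #|A| <= #|T| - s}.
  by move=> _ /imsetP[A /sizeF1 /andP[le_sA _] ->]; rewrite cardsCB; lia.
have [F2 [cardF2 spF2 sizeF2]] :=
  rel_sperner_raise_min le_s_Ts le_sT (rel_sperner_setC spF1) sizeCF1.
exists [set ~: A | A in F2]; split; last 2 first.
- exact: rel_sperner_setC.
- by move=> _ /imsetP[A /sizeF2 /andP[le_sA le_As] ->]; rewrite cardsCB; lia.
by rewrite !(card_imset _ (@setC_inj T)) in cardF2 *; rewrite cardF2.
Qed.

End RelSperner.

Section CloseAndDifferencing.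
Variables (T : finType) (s : nat).
Implicit Types A B X : {set T}.

Definition close_le : rel {set T} := fun A B => minn #|A :\: B| #|B :\: A| <= s.

Definition differencing_le : rel {set T} := fun A B => #|A :\: B| <= s.

Lemma close_le_small A B : #|A| <= s -> close_le A B.
Proof.
by move=> le_As; rewrite /close_le geq_min (leq_trans (subset_leq_card (subsetDl A B))).
Qed.

Lemma close_le_grow A B X : B \subset X -> #|X| <= s -> close_le A B -> close_le A X.
Proof. by move=> _ le_Xs _; rewrite /close_le minnC; apply: close_le_small. Qed.

Lemma close_le_setC A B : close_le (~: A) (~: B) = close_le B A.
Proof. by rewrite /close_le !setDE !setCK (setIC (~: A)) (setIC (~: B)). Qed.

Lemma differencing_le_small A B : #|A| <= s -> differencing_le A B.
Proof. exact/leq_trans/subset_leq_card/subsetDl. Qed.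

Lemma differencing_le_grow A B X :
  B \subset X -> #|X| <= s -> differencing_le A B -> differencing_le A X.
Proof. by move=> BX _; apply/leq_trans/subset_leq_card/setDS. Qed.

Lemma differencing_le_setC A B : differencing_le (~: A) (~: B) = differencing_le B A.
Proof. by rewrite /differencing_le !setDE setCK setIC. Qed.

End CloseAndDifferencing.

Lemma L_close_rel_sperner n s (F : {set {set 'I_n}}) :
  L_close (range1 s) F <-> rel_sperner (close_le s) F.
Proof.
rewrite /L_close /range1 /close_le; split=> spF A B AF BF neqAB.
  by have /andP[] := spF A B AF BF neqAB; rewrite leq_min !card_setD_gt0 => /andP[-> _].
have neqBA : B != A by rewrite eq_sym.
have [/andP[nAB le_s] /andP[nBA _]] := (spF A B AF BF neqAB, spF B A BF AF neqBA).
by rewrite leq_min !card_setD_gt0 nAB nBA.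
Qed.

Lemma L_differencing_rel_sperner n s (F : {set {set 'I_n}}) :
  L_differencing (range1 s) F <-> rel_sperner (differencing_le s) F.
Proof. by split=> spF A B AF BF /(spF A B AF BF); rewrite /range1 card_setD_gt0. Qed.

Theorem mainTheorem10 (n s : nat) (F : {set {set 'I_n}}) :
  0 < n -> 0 < s -> 2 * s <= n ->
  (L_close (range1 s) F ->
     exists F' : {set {set 'I_n}}, #|F'| = #|F| /\
       (forall A, A \in F' -> s <= #|A| <= n - s) /\ L_close (range1 s) F') /\
  (L_differencing (range1 s) F ->
     exists F' : {set {set 'I_n}}, #|F'| = #|F| /\
       (forall A, A \in F' -> s <= #|A| <= n - s) /\ L_differencing (range1 s) F').
Proof.
move=> _ _ le_sn; have le_sT : 2 * s <= #|'I_n| by rewrite card_ord.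
split=> [/L_close_rel_sperner spF | /L_differencing_rel_sperner spF].
- have [F' [cardF' spF' sizeF']] := rel_sperner_middle_layers
    (@close_le_small _ s) (@close_le_grow _ s) (@close_le_setC _ s) le_sT spF.
  exists F'; split=> //; split=> [A /sizeF' | ]; first by rewrite card_ord.
  exact/L_close_rel_sperner.
- have [F' [cardF' spF' sizeF']] := rel_sperner_middle_layers
    (@differencing_le_small _ s) (@differencing_le_grow _ s)
    (@differencing_le_setC _ s) le_sT spF.
  exists F'; split=> //; split=> [A /sizeF' | ]; first by rewrite card_ord.
  exact/L_differencing_rel_sperner.
Qed.
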